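(* Let $(X_1,d_1)$ and $(X_2,d_2)$ be metric spaces admitting weak convergences $w_1,w_2$ respectively, and let $1\le q<\infty$. Then $w_1\otimes w_2$ is a weak convergence for $(X_1\times X_2,d_1\otimes_q d_2)$.
   Context: A convergence $c$ on a set $X$ is a rule assigning at most one point of $X$ as the ''limit'' of each sequence in $X$, such that whenever a sequence has limit $x$, every subsequence also has limit $x$; we write $x_n\to x$ in $c$. A convergence $w$ on $X$ is a weak convergence for $(X,d)$ if: (W1) whenever $\{x_n\}$ and $y$ in $X$ satisfy $\sup_n d(x_n,y)<\infty$, there are a subsequence $\{n_k\}$ and $x\in X$ with $x_{n_k}\to x$ in $w$; (W2) whenever $x_n\to x$ in $w$, $d(x,y)\le\liminf_n d(x_n,y)$ for all $y\in X$; (W3) whenever $x_n\to x$ in $w$ and $d(x_n,y)\to d(x,y)$ for some $y\in X$, then $d(x_n,x)\to0$. The metric $d_1\otimes_q d_2$ on $X_1\times X_2$ is $((x_1,x_2),(x_1',x_2'))\mapsto (d_1^q(x_1,x_1')+d_2^q(x_2,x_2'))^{1/q}$. The convergence $w_1\otimes w_2$ on $X_1\times X_2$ declares $(x_{1,n},x_{2,n})\to(x_1,x_2)$ iff $x_{1,n}\to x_1$ in $w_1$ and $x_{2,n}\to x_2$ in $w_2$. *)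

From HB Require Import structures.
From mathcomp Require Import all_boot all_order all_algebra.
From mathcomp Require Import all_classical all_reals all_analysis.
Set Implicit Arguments. Unset Strict Implicit. Unset Printing Implicit Defensive.
Import Order.TTheory GRing.Theory Num.Theory.
Import numFieldNormedType.Exports.
Local Open Scope classical_set_scope.
Local Open Scope ring_scope.

Definition is_metric {R : realType} {X : Type} (d : X -> X -> R) : Prop :=
  (forall x y, d x y = 0 <-> x = y) /\
  (forall x y, d x y = d y x) /\
  (forall x y z, d x z <= d x y + d y z).

Definition is_convergence {X : Type} (c : (nat -> X) -> X -> Prop) : Prop :=
  (forall u x y, c u x -> c u y -> x = y) /\
  (forall u x (phi : nat -> nat), c u x ->
      (forall n m, (n < m)%N -> (phi n < phi m)%N) -> c (u \o phi) x).

Definition weak_convergence {R : realType} {X : Type} (d : X -> X -> R)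
    (w : (nat -> X) -> X -> Prop) : Prop :=
  is_convergence w /\
  (* (W1) *)
  (forall (u : nat -> X) (y : X), (exists M : R, forall n, d (u n) y <= M) ->
     exists (phi : nat -> nat) (x : X),
       (forall n m, (n < m)%N -> (phi n < phi m)%N) /\ w (u \o phi) x) /\
  (* (W2) *)
  (forall u x, w u x -> forall y,
     ((d x y)%:E <= limn_einf (fun n => (d (u n) y)%:E))%E) /\
  (* (W3) *)
  (forall u x, w u x -> forall y,
     (fun n => d (u n) y) @ \oo --> d x y ->
     (fun n => d (u n) x) @ \oo --> (0 : R)).

Definition prod_metric {R : realType} {X1 X2 : Type} (q : R)
    (d1 : X1 -> X1 -> R) (d2 : X2 -> X2 -> R) : X1 * X2 -> X1 * X2 -> R :=
  fun p p' => powR (powR (d1 p.1 p'.1) q + powR (d2 p.2 p'.2) q) q^-1.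

Definition prod_conv {X1 X2 : Type} (w1 : (nat -> X1) -> X1 -> Prop)
    (w2 : (nat -> X2) -> X2 -> Prop) : (nat -> X1 * X2) -> X1 * X2 -> Prop :=
  fun u p => w1 (fun n => (u n).1) p.1 /\ w2 (fun n => (u n).2) p.2.

(** Each coordinate distance is bounded by the product distance, so (W1)
    follows by extracting a subsequence twice.  Since [x |-> x ^ q] is an
    increasing bijection of [[0, +oo[] and
    [liminf (a_n + b_n) >= liminf a_n + liminf b_n], (W2) passes to the
    product.  For (W3): if [a_n + b_n -> a + b] while [liminf a_n >= a] and
    [liminf b_n >= b], then [a_n -> a] and [b_n -> b]; applied to the [q]-th
    powers of the coordinate distances to [y], this reduces (W3) for the
    product to (W3) in each factor. *)
From mathcomp Require Import all_boot all_order all_algebra.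
From mathcomp Require Import all_classical all_reals all_analysis.
From mathcomp Require Import lra.
Import Order.TTheory GRing.Theory Num.Theory.
Import numFieldNormedType.Exports.
Local Open Scope classical_set_scope.
Local Open Scope ring_scope.

Section liminf_bounds.
Context {R : realType}.
Implicit Types (u v : nat -> R) (a b : R).

Definition liminf_ge u a := forall t, t < a -> \forall n \near \oo, t < u n.
Definition limsup_le u a := forall t, a < t -> \forall n \near \oo, u n < t.

Lemma liminf_geP u a :
  (a%:E <= limn_einf (fun n => (u n)%:E))%E <-> liminf_ge u a.
Proof.
rewrite limn_einf_lim (cvg_lim _ (@cvg_einfs_sup _ _)) //; split.
- move=> a_le t ta.
  have /ereal_sup_gt[_ [N _ <-] tN] :
      (t%:E < ereal_sup (range (einfs (fun n => (u n)%:E))))%E.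
    by apply: lt_le_trans a_le; rewrite lte_fin.
  exists N => // n /= Nn; rewrite -lte_fin.
  by apply: lt_le_trans tN _; apply: ereal_inf_lbound; exists n.
- move=> a_le; apply/lee_subgt0Pr => e e0.
  have [N _ uN] : \forall n \near \oo, a - e < u n.
    by apply: a_le; rewrite ltrBlDr ltrDl.
  apply: le_trans (ereal_sup_ubound (ex_intro2 _ _ N I erefl)).
  apply: le_ereal_inf_tmp => _ [n /= Nn <-].
  by rewrite -EFinB lee_fin ltW // uN.
Qed.

Lemma cvgr_liminf_limsupP u a :
  u @ \oo --> a <-> liminf_ge u a /\ limsup_le u a.
Proof.
split=> [ua | [ua_ge ua_le]].
  by split=> t; [exact: cvgr_gt _ ua t | exact: cvgr_lt _ ua t].
apply/cvgrPdist_lt => e e0.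
have [ae ea] : a - e < a /\ a < a + e by split; lra.
by apply: filterS2 (ua_ge _ ae) (ua_le _ ea) => n *; rewrite ltr_distlC; apply/andP.
Qed.

Lemma liminf_geD {u v a b} :
  liminf_ge u a -> liminf_ge v b -> liminf_ge (fun n => u n + v n) (a + b).
Proof.
move=> ua vb t tab; set e := (a + b - t) / 2.
have [ae be] : a - e < a /\ b - e < b by split; rewrite /e; lra.
by apply: filterS2 (ua _ ae) (vb _ be) => n; rewrite /e; lra.
Qed.

Lemma limsup_le_cvgD {u v a b} : (fun n => u n + v n) @ \oo --> a + b ->
  liminf_ge v b -> limsup_le u a.
Proof.
move=> uv vb t at_; set e := (t - a) / 2.
have [abe be] : a + b < a + b + e /\ b - e < b by split; rewrite /e; lra.
by apply: filterS2 (cvgr_lt _ uv _ abe) (vb _ be) => n; rewrite /e; lra.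
Qed.

Lemma cvgD_liminf_ge {u v a b} : (fun n => u n + v n) @ \oo --> a + b ->
  liminf_ge u a -> liminf_ge v b -> u @ \oo --> a /\ v @ \oo --> b.
Proof.
move=> uv ua vb; have vu : (fun n => v n + u n) @ \oo --> b + a.
  by rewrite addrC; under eq_fun do rewrite addrC.
by split; apply/cvgr_liminf_limsupP; split=> //;
  [exact: limsup_le_cvgD uv vb | exact: limsup_le_cvgD vu ua].
Qed.

End liminf_bounds.

Section powR_limits.
Context {R : realType}.
Implicit Types (u : nat -> R) (p a t : R).

Lemma powRK p a : 0 < p -> 0 <= a -> (a `^ p) `^ p^-1 = a.
Proof. by move=> p0 a0; rewrite -powRrM mulfV ?gt_eqF // powRr1. Qed.

Lemma powRVK p a : 0 < p -> 0 <= a -> (a `^ p^-1) `^ p = a.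
Proof. by move=> p0 a0; rewrite -powRrM mulVf ?gt_eqF // powRr1. Qed.

Lemma gt0_ltr_powRE p a b : 0 < p -> 0 <= a -> 0 <= b ->
  (a `^ p < b `^ p) = (a < b).
Proof.
move=> p0 a0 b0; apply/idP/idP; last exact: gt0_ltr_powR.
have p'0 : 0 < p^-1 by rewrite invr_gt0.
move=> /(gt0_ltr_powR p'0); rewrite !powRK //.
by apply; rewrite nnegrE powR_ge0.
Qed.

Lemma powR_gt_threshold {p a t} : 0 < p -> 0 <= a -> t < a `^ p ->
  exists2 s, s < a & forall x, 0 <= x -> s < x -> t < x `^ p.
Proof.
move=> p0 a0 ta; have [t0 | t_gt0] := ltP t 0.
  by exists (a - 1) => [|x _ _]; [lra | exact: lt_le_trans (powR_ge0 _ _)].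
exists (t `^ p^-1) => [|x x0 tx].
  by rewrite -(gt0_ltr_powRE _ _ _ p0) ?powRVK ?powR_ge0.
by rewrite -[t](powRVK _ _ p0 t_gt0) gt0_ltr_powRE ?powR_ge0.
Qed.

Lemma powR_lt_threshold {p a t} : 0 < p -> 0 <= a -> a `^ p < t ->
  exists2 s, a < s & forall x, 0 <= x -> x < s -> x `^ p < t.
Proof.
move=> p0 a0 at_; have t0 : 0 <= t by apply: ltW (le_lt_trans (powR_ge0 _ _) at_).
exists (t `^ p^-1) => [|x x0 xt].
  by rewrite -(gt0_ltr_powRE _ _ _ p0) ?powRVK ?powR_ge0.
by rewrite -[t](powRVK _ _ p0 t0) gt0_ltr_powRE ?powR_ge0.
Qed.

Lemma liminf_ge_powR {p u a} : 0 < p -> 0 <= a -> (forall n, 0 <= u n) ->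
  liminf_ge u a -> liminf_ge (fun n => u n `^ p) (a `^ p).
Proof.
move=> p0 a0 u0 ua t /(powR_gt_threshold p0 a0)[s sa st].
by apply: filterS (ua _ sa) => n; apply: st.
Qed.

Lemma limsup_le_powR {p u a} : 0 < p -> 0 <= a -> (forall n, 0 <= u n) ->
  limsup_le u a -> limsup_le (fun n => u n `^ p) (a `^ p).
Proof.
move=> p0 a0 u0 ua t /(powR_lt_threshold p0 a0)[s sa st].
by apply: filterS (ua _ sa) => n; apply: st.
Qed.

Lemma cvg_powR {p u a} : 0 < p -> 0 <= a -> (forall n, 0 <= u n) ->
  u @ \oo --> a -> (fun n => u n `^ p) @ \oo --> a `^ p.
Proof.
move=> p0 a0 u0 /cvgr_liminf_limsupP[ua_ge ua_le].
by apply/cvgr_liminf_limsupP; split;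
  [exact: liminf_ge_powR | exact: limsup_le_powR].
Qed.

Lemma cvg_powRK {p u a} : 0 < p -> 0 <= a -> (forall n, 0 <= u n) ->
  (fun n => u n `^ p) @ \oo --> a `^ p -> u @ \oo --> a.
Proof.
move=> p0 a0 u0; have p'0 : 0 < p^-1 by rewrite invr_gt0.
move=> /(cvg_powR p'0 (powR_ge0 _ _) (fun n => powR_ge0 _ _)).
by rewrite powRK //; under eq_fun do rewrite powRK //.
Qed.

End powR_limits.

Definition lq_norm2 {R : realType} (q a b : R) := (a `^ q + b `^ q) `^ q^-1.

Section lq_norm2.
Context {R : realType} {q : R}.
Hypothesis q_gt0 : 0 < q.
Implicit Types (a b : R).
Local Notation lq_norm2 := (lq_norm2 q).

Lemma lq_norm2C a b : lq_norm2 a b = lq_norm2 b a.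
Proof. by rewrite /lq_norm2 addrC. Qed.

Lemma lq_norm2_00 : lq_norm2 0 0 = 0.
Proof.
have q'_neq0 : q^-1 != 0 by rewrite invr_neq0 // gt_eqF.
by rewrite /lq_norm2 powR0 ?gt_eqF // addr0 powR0.
Qed.

Lemma lq_norm2_gel a b : 0 <= a -> 0 <= b -> a <= lq_norm2 a b.
Proof.
move=> a0 b0; rewrite -[a in a <= _](powRK _ _ q_gt0 a0) /lq_norm2.
apply: ge0_ler_powR; rewrite ?invr_ge0 ?(ltW q_gt0) ?nnegrE ?addr_ge0 ?powR_ge0 //.
by rewrite lerDl powR_ge0.
Qed.

Lemma lq_norm2_ger a b : 0 <= a -> 0 <= b -> b <= lq_norm2 a b.
Proof. by move=> a0 b0; rewrite lq_norm2C lq_norm2_gel. Qed.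

Section sequences.
Context {u v : nat -> R} {a b : R}.
Hypotheses (u_ge0 : forall n, 0 <= u n) (v_ge0 : forall n, 0 <= v n).
Hypotheses (a_ge0 : 0 <= a) (b_ge0 : 0 <= b).

Let q'_gt0 : 0 < q^-1. Proof. by rewrite invr_gt0. Qed.
Let powRD_ge0 x y : 0 <= x `^ q + y `^ q. Proof. by rewrite addr_ge0 ?powR_ge0. Qed.

Lemma liminf_ge_lq_norm2 : liminf_ge u a -> liminf_ge v b ->
  liminf_ge (fun n => lq_norm2 (u n) (v n)) (lq_norm2 a b).
Proof.
move=> ua vb; apply: liminf_ge_powR => //.
by apply: liminf_geD; apply: liminf_ge_powR.
Qed.

Lemma cvg_lq_norm2 : u @ \oo --> a -> v @ \oo --> b ->
  (fun n => lq_norm2 (u n) (v n)) @ \oo --> lq_norm2 a b.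
Proof.
move=> ua vb; apply: cvg_powR => //.
by apply: cvgD; apply: cvg_powR.
Qed.

Lemma cvg_lq_norm2_liminf_ge :
  (fun n => lq_norm2 (u n) (v n)) @ \oo --> lq_norm2 a b ->
  liminf_ge u a -> liminf_ge v b -> u @ \oo --> a /\ v @ \oo --> b.
Proof.
move=> /(cvg_powRK q'_gt0 (powRD_ge0 _ _) (fun n => powRD_ge0 _ _)) uv ua vb.
have [uqa vqb] := cvgD_liminf_ge uv (liminf_ge_powR q_gt0 a_ge0 u_ge0 ua)
  (liminf_ge_powR q_gt0 b_ge0 v_ge0 vb).
by split; [exact: cvg_powRK q_gt0 a_ge0 u_ge0 uqa |
           exact: cvg_powRK q_gt0 b_ge0 v_ge0 vqb].
Qed.

End sequences.
End lq_norm2.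

Lemma metric_ge0 {R : realType} {X : Type} (d : X -> X -> R) :
  is_metric d -> forall x y, 0 <= d x y.
Proof.
move=> [d0 [dC dtri]] x y; have := dtri x y x.
rewrite (dC y x) (proj2 (d0 x x) erefl); lra.
Qed.

Section weak_convergence_axioms.
Context {R : realType} {X : Type}.
Variables (d : X -> X -> R) (w : (nat -> X) -> X -> Prop).

Definition bounded_subseq_cvg := forall (u : nat -> X) (y : X),
  (exists M : R, forall n, d (u n) y <= M) ->
  exists (phi : nat -> nat) (x : X),
    (forall n m, (n < m)%N -> (phi n < phi m)%N) /\ w (u \o phi) x.

Definition dist_lsc := forall u x, w u x -> forall y,
  ((d x y)%:E <= limn_einf (fun n => (d (u n) y)%:E))%E.

Definition radon_riesz := forall u x, w u x -> forall y,
  (fun n => d (u n) y) @ \oo --> d x y -> (fun n => d (u n) x) @ \oo --> (0 : R).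

End weak_convergence_axioms.

Section product.
Context {R : realType} {X1 X2 : Type}.
Variables (d1 : X1 -> X1 -> R) (d2 : X2 -> X2 -> R).
Variables (w1 : (nat -> X1) -> X1 -> Prop) (w2 : (nat -> X2) -> X2 -> Prop).
Variable q : R.
Hypothesis q_gt0 : 0 < q.
Hypotheses (d1_ge0 : forall x y, 0 <= d1 x y) (d2_ge0 : forall x y, 0 <= d2 x y).

Local Notation d := (prod_metric q d1 d2).
Local Notation w := (prod_conv w1 w2).

Lemma prod_conv_is_convergence :
  is_convergence w1 -> is_convergence w2 -> is_convergence w.
Proof.
move=> [uniq1 sub1] [uniq2 sub2]; split.
  move=> u [x1 x2] [y1 y2] [/= ux1 ux2] [/= uy1 uy2].
  by rewrite (uniq1 _ _ _ ux1 uy1) (uniq2 _ _ _ ux2 uy2).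
move=> u x phi [ux1 ux2] phi_incr.
by split; [exact: (sub1 _ _ _ ux1) | exact: (sub2 _ _ _ ux2)].
Qed.

Lemma prod_bounded_subseq_cvg : is_convergence w1 ->
  bounded_subseq_cvg d1 w1 -> bounded_subseq_cvg d2 w2 -> bounded_subseq_cvg d w.
Proof.
move=> [_ sub1] ext1 ext2 u y [M uM].
have [|phi [x1 [phi_incr ux1]]] := ext1 (fun n => (u n).1) y.1.
  by exists M => n; apply: le_trans (uM n); apply: lq_norm2_gel.
have [|psi [x2 [psi_incr ux2]]] := ext2 (fun n => (u (phi n)).2) y.2.
  by exists M => n; apply: le_trans (uM (phi n)); apply: lq_norm2_ger.
exists (phi \o psi), (x1, x2); split=> [n m nm|]; first exact/phi_incr/psi_incr.
by split; [exact: sub1 ux1 psi_incr | exact: ux2].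
Qed.

Lemma prod_dist_lsc : dist_lsc d1 w1 -> dist_lsc d2 w2 -> dist_lsc d w.
Proof.
move=> lsc1 lsc2 u x [ux1 ux2] y; apply/liminf_geP.
by apply: liminf_ge_lq_norm2 => //; apply/liminf_geP; [exact: lsc1 | exact: lsc2].
Qed.

Lemma prod_radon_riesz : dist_lsc d1 w1 -> dist_lsc d2 w2 ->
  radon_riesz d1 w1 -> radon_riesz d2 w2 -> radon_riesz d w.
Proof.
move=> lsc1 lsc2 rr1 rr2 u x [ux1 ux2] y uy.
have [uy1 uy2] : (fun n => d1 (u n).1 y.1) @ \oo --> d1 x.1 y.1 /\
                 (fun n => d2 (u n).2 y.2) @ \oo --> d2 x.2 y.2.
  by apply: (cvg_lq_norm2_liminf_ge q_gt0) => //; apply/liminf_geP;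
    [exact: (lsc1 _ _ ux1) | exact: (lsc2 _ _ ux2)].
rewrite -(lq_norm2_00 q_gt0); apply: cvg_lq_norm2 => //.
  exact: rr1 uy1.
exact: rr2 uy2.
Qed.

End product.

Theorem proposition2p8 (R : realType) (X1 X2 : Type)
  (d1 : X1 -> X1 -> R) (d2 : X2 -> X2 -> R)
  (w1 : (nat -> X1) -> X1 -> Prop) (w2 : (nat -> X2) -> X2 -> Prop) (q : R) :
  is_metric d1 -> is_metric d2 ->
  weak_convergence d1 w1 -> weak_convergence d2 w2 ->
  1 <= q ->
  weak_convergence (prod_metric q d1 d2) (prod_conv w1 w2).
Proof.
move=> /metric_ge0 d1_ge0 /metric_ge0 d2_ge0.
move=> [conv1 [ext1 [lsc1 rr1]]] [conv2 [ext2 [lsc2 rr2]]] q_ge1.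
have q_gt0 : 0 < q by apply: lt_le_trans q_ge1.
split; first exact: prod_conv_is_convergence.
split; first exact: prod_bounded_subseq_cvg.
split; first exact: prod_dist_lsc.
exact: prod_radon_riesz.
Qed.
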